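(* Let $X$ be a compact metric space and let $f\colon X\to X$ be a homeomorphism which is positively $n$-expansive (for some integer $n\geq1$), transitive, and has the shadowing property. Then $X$ is finite.
   Context: Let $(X,d)$ be a metric space and $f\colon X\to X$. For $x\in X$ and $c>0$, $W^s_c(x)=\{y\in X: d(f^k(y),f^k(x))\leq c \text{ for every } k\geq 0\}$. The map $f$ is positively $n$-expansive if there exists $c>0$ such that for every $x\in X$ the set $W^s_c(x)$ contains at most $n$ distinct points. $f$ is transitive if for every pair $U,V$ of nonempty open subsets of $X$ there is $k\in\mathbb{N}$ with $f^k(U)\cap V\neq\emptyset$. A sequence $(x_k)_{k\in\mathbb{Z}}$ is a $\delta$-pseudo orbit if $d(f(x_k),x_{k+1})<\delta$ for all $k$; it is $\varepsilon$-shadowed if there is $y\in X$ with $d(f^k(y),x_k)<\varepsilon$ for all $k\in\mathbb{Z}$. $f$ has the shadowing property if for every $\varepsilon>0$ there is $\delta>0$ such that every $\delta$-pseudo orbit is $\varepsilon$-shadowed. *)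

From Stdlib Require Import Reals List.
Open Scope R_scope.

Definition is_metric {X : Type} (d : X -> X -> R) : Prop :=
  (forall x y, 0 <= d x y) /\
  (forall x y, d x y = 0 <-> x = y) /\
  (forall x y, d x y = d y x) /\
  (forall x y z, d x z <= d x y + d y z).

Definition m_open {X : Type} (d : X -> X -> R) (U : X -> Prop) : Prop :=
  forall x, U x -> exists r, 0 < r /\ forall y, d x y < r -> U y.

Definition m_compact {X : Type} (d : X -> X -> R) : Prop :=
  forall (I : Type) (U : I -> X -> Prop),
    (forall i, m_open d (U i)) ->
    (forall x, exists i, U i x) ->
    exists l : list I, forall x, exists i, In i l /\ U i x.

Definition m_continuous {X : Type} (d : X -> X -> R) (f : X -> X) : Prop :=
  forall x eps, 0 < eps -> exists delta, 0 < delta /\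
    forall y, d x y < delta -> d (f x) (f y) < eps.

Definition homeomorphism {X : Type} (d : X -> X -> R) (f : X -> X) : Prop :=
  m_continuous d f /\
  exists g : X -> X, m_continuous d g /\
    (forall x, g (f x) = x) /\ (forall x, f (g x) = x).

Fixpoint iter {X : Type} (f : X -> X) (k : nat) (x : X) : X :=
  match k with O => x | S k' => f (iter f k' x) end.

Definition Ws {X : Type} (d : X -> X -> R) (f : X -> X) (c : R) (x : X) (y : X)
  : Prop := forall k : nat, d (iter f k y) (iter f k x) <= c.

Definition at_most {X : Type} (n : nat) (A : X -> Prop) : Prop :=
  exists l : list X, (length l <= n)%nat /\ forall y, A y -> In y l.

Definition pos_n_expansive {X : Type} (d : X -> X -> R) (f : X -> X) (n : nat)
  : Prop :=
  exists c, 0 < c /\ forall x, at_most n (Ws d f c x).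

Definition transitive {X : Type} (d : X -> X -> R) (f : X -> X) : Prop :=
  forall U V : X -> Prop, m_open d U -> m_open d V ->
    (exists x, U x) -> (exists x, V x) ->
    exists (k : nat) (x : X), U x /\ V (iter f k x).

Definition zpow {X : Type} (f g : X -> X) (k : Z) (x : X) : X :=
  match k with
  | Z0 => x
  | Zpos p => iter f (Pos.to_nat p) x
  | Zneg p => iter g (Pos.to_nat p) x
  end.

Definition pseudo_orbit {X : Type} (d : X -> X -> R) (f : X -> X) (delta : R)
  (xs : Z -> X) : Prop := forall k, d (f (xs k)) (xs (k + 1)%Z) < delta.

Definition shadowed {X : Type} (d : X -> X -> R) (f g : X -> X) (eps : R)
  (xs : Z -> X) : Prop := exists y, forall k, d (zpow f g k y) (xs k) < eps.

Definition shadowing {X : Type} (d : X -> X -> R) (f g : X -> X) : Prop :=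
  forall eps, 0 < eps -> exists delta, 0 < delta /\
    forall xs, pseudo_orbit d f delta xs -> shadowed d f g eps xs.

Definition finite_type (X : Type) : Prop := exists l : list X, forall x, In x l.

(* Let c be an n-expansivity constant and let δ be the shadowing constant for
   c/4.  Shadowing the pseudo-orbit that runs along the backward orbit of a
   point p and then jumps to the forward orbit of a point a of a finite
   min(δ, c/4)-net shows that the backward orbit of p is c/2-tracked by a point
   of W^s_c(a); hence a finite set Z of at most n·|net| points tracks every
   backward orbit.  Given a finite set F ⊆ X, pick a horizon M such that two
   points of F that are c-close at times 0..M are c-close forever.  Two points
   of F whose M-th images are tracked by the same z ∈ Z are c-close at times
   0..M (apply g^(M-k)), hence lie in a common W^s_c; so |F| ≤ n·|Z|. *)
From Stdlib Require Import Reals List Lra Lia ZArith Classical.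
Open Scope R_scope.

Lemma at_most_union {I X : Type} (n : nat) (S : I -> X -> Prop) (l : list I) :
  (forall i, In i l -> at_most n (S i)) ->
  at_most (n * length l) (fun x => exists i, In i l /\ S i x).
Proof.
  induction l as [|i l IH]; intros Hl.
  - exists nil. split; [simpl; lia|]. intros x [i [[] _]].
  - destruct (Hl i (or_introl eq_refl)) as [li [Hli Hi]].
    destruct IH as [L [HL HLx]]; [intros j Hj; apply Hl; right; exact Hj|].
    exists (li ++ L). split.
    + rewrite length_app. simpl length. rewrite Nat.mul_succ_r. lia.
    + intros x [j [[<-|Hj] Hx]]; apply in_or_app; [left; auto|right; eauto].
Qed.

Lemma exists_uniform_horizon {T : Type} (Q : T -> nat -> Prop) (l : list T) :
  exists M, forall t, In t l ->
    (forall k, (k <= M)%nat -> Q t k) -> forall k, Q t k.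
Proof.
  induction l as [|t l [M HM]].
  - exists 0%nat. intros t [].
  - destruct (classic (forall k, Q t k)) as [Hall|Hfail].
    + exists M. intros u [<-|Hu] HuM; [exact Hall|exact (HM u Hu HuM)].
    + apply not_all_ex_not in Hfail as [K HK].
      exists (Nat.max K M). intros u [<-|Hu] HuM.
      * exfalso. apply HK, HuM. lia.
      * apply (HM u Hu). intros k Hk. apply HuM. lia.
Qed.

Lemma finite_type_of_NoDup_length_le {X : Type} (N : nat) :
  (forall F : list X, NoDup F -> (length F <= N)%nat) -> finite_type X.
Proof.
  intros Hbound. apply NNPP. intros Hinfinite.
  assert (Hfresh : forall F : list X, exists x, ~ In x F).
  { intros F. apply not_all_not_ex. intros HF. apply Hinfinite.
    exists F. intros x. apply NNPP, HF. }
  assert (Hlong : forall k, exists F : list X, NoDup F /\ length F = k).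
  { induction k as [|k [F [HF HFk]]].
    - exists nil. split; [constructor|reflexivity].
    - destruct (Hfresh F) as [x Hx].
      exists (x :: F). split; [constructor; assumption|simpl; lia]. }
  destruct (Hlong (S N)) as [F [HF HFk]].
  specialize (Hbound F HF). lia.
Qed.

Lemma iter_add {X : Type} (f : X -> X) (a b : nat) (x : X) :
  iter f (a + b) x = iter f a (iter f b x).
Proof. induction a as [|a IH]; simpl; [reflexivity|now rewrite IH]. Qed.

Lemma iter_succ_r {X : Type} (f : X -> X) (a : nat) (x : X) :
  iter f (S a) x = iter f a (f x).
Proof. now rewrite <- Nat.add_1_r, iter_add. Qed.

Lemma iter_cancel {X : Type} (f g : X -> X) (Hgf : forall x, g (f x) = x)
  (a : nat) (x : X) : iter g a (iter f a x) = x.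
Proof.
  revert x; induction a as [|a IH]; intros x; [reflexivity|].
  rewrite iter_succ_r. simpl. now rewrite Hgf, IH.
Qed.

Lemma iter_cancel_sub {X : Type} (f g : X -> X) (Hgf : forall x, g (f x) = x)
  (k m : nat) (x : X) :
  (k <= m)%nat -> iter g (m - k) (iter f m x) = iter f k x.
Proof.
  intros Hkm. replace m with (m - k + k)%nat at 2 by lia.
  rewrite iter_add. apply iter_cancel, Hgf.
Qed.

Lemma zpow_of_nat {X : Type} (f g : X -> X) (k : nat) (x : X) :
  zpow f g (Z.of_nat k) x = iter f k x.
Proof. destruct k; simpl; [reflexivity|now rewrite SuccNat2Pos.id_succ]. Qed.

Section Metric.

Context {X : Type} {d : X -> X -> R}.
Hypothesis Hd : is_metric d.

Lemma dist_refl (x : X) : d x x = 0.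
Proof. destruct Hd as [_ [Heq _]]. now apply Heq. Qed.

Lemma dist_sym (x y : X) : d x y = d y x.
Proof. destruct Hd as [_ [_ [Hsym _]]]. apply Hsym. Qed.

Lemma dist_triangle (x y z : X) : d x z <= d x y + d y z.
Proof. destruct Hd as [_ [_ [_ Htri]]]. apply Htri. Qed.

Lemma compact_finite_net (r : R) :
  m_compact d -> 0 < r -> exists A : list X, forall p, exists a, In a A /\ d a p < r.
Proof.
  intros Hcompact Hr.
  destruct (Hcompact X (fun a p => d a p < r)) as [A HA].
  - intros a p Hp. exists (r - d a p). split; [lra|].
    intros q Hq. pose proof (dist_triangle a p q). lra.
  - intros p. exists p. rewrite dist_refl. exact Hr.
  - exists A. exact HA.
Qed.

Context {f g : X -> X}.
Hypotheses (Hgf : forall x, g (f x) = x) (Hfg : forall x, f (g x) = x).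

(* Its only jump, from time -1 to time 0, has size [d p a]. *)
Definition glued_orbit (p a : X) (t : Z) : X :=
  match t with
  | Zneg q => iter g (Pos.to_nat q) p
  | _ => iter f (Z.to_nat t) a
  end.

Lemma glued_orbit_of_nat (p a : X) (k : nat) :
  glued_orbit p a (Z.of_nat k) = iter f k a.
Proof. destruct k; simpl; [reflexivity|now rewrite SuccNat2Pos.id_succ]. Qed.

Lemma glued_orbit_pseudo_orbit (delta : R) (p a : X) :
  0 < delta -> d p a < delta -> pseudo_orbit d f delta (glued_orbit p a).
Proof.
  intros Hdelta Hpa [|q|q].
  - simpl. rewrite dist_refl. exact Hdelta.
  - simpl. rewrite Pos2Nat.inj_add, Nat.add_comm. simpl. rewrite dist_refl. exact Hdelta.
  - destruct (Pos.succ_pred_or q) as [->|<-].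
    + simpl. now rewrite Hfg.
    + replace (Z.neg (Pos.succ (Pos.pred q)) + 1)%Z with (Z.neg (Pos.pred q)) by lia.
      simpl. rewrite Pos2Nat.inj_succ. simpl. rewrite Hfg, dist_refl. exact Hdelta.
Qed.

Lemma shadow_of_glued_orbit (eps : R) (p a z : X) :
  (forall t, d (zpow f g t z) (glued_orbit p a t) < eps) ->
  (forall k, d (iter f k z) (iter f k a) < eps) /\
  (forall j, d (iter g j z) (iter g j p) < eps + d a p).
Proof.
  intros Hz. split.
  - intros k. rewrite <- (zpow_of_nat f g), <- (glued_orbit_of_nat p). apply Hz.
  - pose proof (dist_triangle z a p) as Htri.
    pose proof (Hz 0%Z) as Hz0; simpl in Hz0.
    intros [|j]; simpl; [lra|].
    specialize (Hz (Z.neg (Pos.of_succ_nat j))); simpl in Hz.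
    rewrite SuccNat2Pos.id_succ in Hz. simpl in Hz.
    destruct Hd as [Hpos _]. pose proof (Hpos a p). lra.
Qed.

Lemma exists_backward_tracking_set (c : R) (n : nat) :
  m_compact d -> shadowing d f g -> 0 < c ->
  (forall x, at_most n (Ws d f c x)) ->
  exists Zs : list X, forall p, exists z, In z Zs /\
    forall j, d (iter g j z) (iter g j p) <= c / 2.
Proof.
  intros Hcompact Hshadowing Hc Hexp.
  destruct (Hshadowing (c / 4)) as [delta [Hdelta Hshadow]]; [lra|].
  pose proof (Rmin_l delta (c / 4)) as Hr_delta.
  pose proof (Rmin_r delta (c / 4)) as Hr_c.
  destruct (compact_finite_net (Rmin delta (c / 4))) as [A HA];
    [exact Hcompact|apply Rmin_glb_lt; lra|].
  destruct (at_most_union n (fun a => Ws d f c a) A) as [Zs [_ HZs]];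
    [intros a _; apply Hexp|].
  exists Zs. intros p.
  destruct (HA p) as [a [Ha Hap]].
  destruct (Hshadow (glued_orbit p a)) as [z Hz].
  { apply glued_orbit_pseudo_orbit; [exact Hdelta|]. rewrite dist_sym. lra. }
  destruct (shadow_of_glued_orbit _ _ _ _ Hz) as [Hforward Hbackward].
  exists z. split.
  - apply HZs. exists a. split; [exact Ha|].
    intros k. specialize (Hforward k). lra.
  - intros j. specialize (Hbackward j). lra.
Qed.

Lemma NoDup_length_le_of_backward_tracking (c : R) (n : nat) (Zs : list X) :
  (forall x, at_most n (Ws d f c x)) ->
  (forall p, exists z, In z Zs /\ forall j, d (iter g j z) (iter g j p) <= c / 2) ->
  forall F : list X, NoDup F -> (length F <= n * length Zs)%nat.
Proof.
  intros Hexp Htrack F HF.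
  destruct (exists_uniform_horizon
              (fun xy k => d (iter f k (snd xy)) (iter f k (fst xy)) <= c)
              (list_prod F F)) as [M HM].
  pose (tracks z x := forall j, d (iter g j z) (iter g j (iter f M x)) <= c / 2).
  assert (Hfiber : forall z x y, In x F -> In y F ->
                     tracks z x -> tracks z y -> Ws d f c x y).
  { intros z x y Hx Hy Hzx Hzy. unfold Ws.
    apply (HM (x, y)); [now apply in_prod|]. intros k Hk; simpl.
    specialize (Hzx (M - k)%nat). specialize (Hzy (M - k)%nat).
    rewrite (iter_cancel_sub f g Hgf) in Hzx, Hzy by exact Hk.
    pose proof (dist_triangle (iter f k y) (iter g (M - k) z) (iter f k x)).
    rewrite dist_sym in Hzy. lra. }
  destruct (at_most_union n (fun z x => In x F /\ tracks z x) Zs) as [L [HL HFL]].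
  { intros z _.
    destruct (classic (exists x0, In x0 F /\ tracks z x0)) as [[x0 [Hx0 Hzx0]]|Hnone].
    - destruct (Hexp x0) as [l [Hl Hlx]]. exists l. split; [exact Hl|].
      intros y [Hy Hzy]. apply Hlx, (Hfiber z); assumption.
    - exists nil. split; [simpl; lia|]. intros y Hy. exfalso. apply Hnone. eauto. }
  apply Nat.le_trans with (length L); [|exact HL].
  apply NoDup_incl_length; [exact HF|]. intros x Hx.
  apply HFL. destruct (Htrack (iter f M x)) as [z [Hz Hzx]]. exists z. auto.
Qed.

End Metric.

Theorem theoremB (X : Type) (d : X -> X -> R) (f g : X -> X) (n : nat) :
  is_metric d ->
  m_compact d ->
  homeomorphism d f ->
  (forall x, g (f x) = x) -> (forall x, f (g x) = x) ->
  (1 <= n)%nat ->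
  pos_n_expansive d f n ->
  transitive d f ->
  shadowing d f g ->
  finite_type X.
Proof.
  intros Hd Hcompact _ Hgf Hfg _ [c [Hc Hexp]] _ Hshadowing.
  destruct (exists_backward_tracking_set Hd Hfg c n Hcompact Hshadowing Hc Hexp) as [Zs HZs].
  apply (finite_type_of_NoDup_length_le (n * length Zs)).
  exact (NoDup_length_le_of_backward_tracking Hd Hgf c n Zs Hexp HZs).
Qed.
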